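(* Let $\mathcal{X}$ be a convex subset of a normed space with norm $\|\cdot\|$ and dual norm $\|\cdot\|_*$, and $F:\mathcal{X}\times\mathcal{X}\to\mathbb{R}$ differentiable in its second argument such that for all $x,y,z\in\mathcal{X}$: $F(z,x)\ge F(z,y)+\langle\nabla_2F(z,y),x-y\rangle+\frac{\alpha}{2}\|x-y\|^2$; $|F(z,x)-F(z,y)|\le G_2\|x-y\|$; and $\|\nabla_2F(x,z)-\nabla_2F(y,z)\|_*\le\beta\|x-y\|$, where $\alpha>0$. Let $x_1\in\mathcal{X}$ and $x_{n+1}=\arg\min_{x\in\mathcal{X}}\sum_{k=1}^nF(x_k,x)$ for $n\ge1$. Let $\theta=\beta/\alpha$ and, for $n\ge2$, $S_n=\frac{1}{n-1}\sum_{k=1}^{n-1}\|x_n-x_k\|$. Then for all $n\ge2$, $\|x_{n+1}-x_n\|\le\frac{\theta S_n}{n}$.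
   Context: The iteration is the value aggregation algorithm AggreVaTe (Follow-the-Leader on the per-round costs $x\mapsto F(x_k,x)$); minimizers are assumed to exist. *)

From HB Require Import structures.
From mathcomp Require Import all_boot all_order all_algebra.
From mathcomp Require Import all_classical all_reals all_analysis.
Set Implicit Arguments. Unset Strict Implicit. Unset Printing Implicit Defensive.
Import Order.TTheory GRing.Theory Num.Theory.
Local Open Scope classical_set_scope.
Local Open Scope ring_scope.

Definition dual_norm (R : realType) (V : normedModType R) (L : V -> R) : R :=
  sup [set `|L v| | v in [set v : V | `|v| <= 1]].

From HB Require Import structures.
From mathcomp Require Import all_boot all_order all_algebra.
From mathcomp Require Import all_classical all_reals all_analysis.
From mathcomp Require Import ring lra.
Set Implicit Arguments.
Unset Strict Implicit.
Unset Printing Implicit Defensive.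
Import Order.TTheory GRing.Theory Num.Theory.
Local Open Scope classical_set_scope.
Local Open Scope ring_scope.

(* Write D = x_n - x_(n+1) and g_k(y) = <grad_2 F(x_k, y), D>.  First-order
   optimality of x_(n+1) for sum_(k <= n) F(x_k, .) and of x_n for
   sum_(k < n) F(x_k, .) gives sum_(k <= n) g_k(x_(n+1)) >= 0 and
   sum_(k < n) g_k(x_n) <= 0.  Strong convexity makes each grad_2 F(x_k, .)
   strongly monotone, so n alpha |D|^2 <= sum_(k <= n) (g_k(x_n) - g_k(x_(n+1)))
   <= sum_(k <= n) g_k(x_n).  Together with the second optimality condition,
   (n - 1) n alpha |D|^2 <= sum_(k < n) (g_n(x_n) - g_k(x_n)), and each term is
   at most beta |x_n - x_k| |D| by the Lipschitz bound on grad_2 F in its first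
   argument. *)

Section NormedModule.
Variables (R : realType) (V W : normedModType R).

Lemma differentiable_big (I : eqType) (r : seq I) (f : I -> V -> W) (a : V) :
  {in r, forall i, differentiable (f i) a} ->
  differentiable (\sum_(i <- r) f i) a.
Proof.
move=> df; rewrite big_seq; elim/big_ind: _ => //.
by move=> g h; exact: differentiableD.
Qed.

Lemma diff_big (I : eqType) (r : seq I) (f : I -> V -> W) (a : V) :
  {in r, forall i, differentiable (f i) a} ->
  'd (\sum_(i <- r) f i) a = \sum_(i <- r) ('d (f i) a : V -> W) :> (V -> W).
Proof.
elim: r => [|i r IH] df; first by rewrite !big_nil diff_cst.
have dr : {in r, forall j, differentiable (f j) a}.
  by move=> j jr; apply: df; rewrite inE jr orbT.
rewrite !big_cons diffD ?IH //; first exact/df/mem_head.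
exact: differentiable_big.
Qed.

Lemma diff_bounded (f : V -> W) (a : V) :
  differentiable f a -> exists M : R, forall v, `|'d f a v| <= M * `|v|.
Proof.
move=> df.
have /linear_boundedP[M [_ HM]] : bounded_near ('d f a) (nbhs (0 : V)).
  exact/continuous_linear_bounded/diff_continuous.
by exists (M + 1); apply: HM; rewrite ltrDl.
Qed.

Lemma diff_ge0_of_segment_min (f : V -> R) (a h : V) :
  differentiable f a ->
  (forall t : R, 0 < t -> t <= 1 -> f a <= f (a + t *: h)) ->
  0 <= 'd f a h.
Proof.
move=> df fmin; rewrite -deriveE //.
have /cvg_dnbhs_at_right dfR := @diff_derivable _ _ _ _ _ h df.
rewrite /derive -(cvg_lim _ dfR) //; apply: limr_ge; first exact: cvgP dfR.
near=> t.
have t0 : 0 < t by near: t; exact: nbhs_right_gt.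
have t1 : t <= 1 by near: t; exact: nbhs_right_le.
rewrite /= [_ + a]addrC; apply: mulr_ge0; first by rewrite invr_ge0 ltW.
by rewrite subr_ge0; exact: fmin.
Unshelve. all: by end_near. Qed.

Lemma dual_norm_ge0 (L : V -> R) : 0 <= dual_norm L.
Proof.
rewrite /dual_norm; set E := [set _ | _ in _].
have [[_ ubE]|/sup_out-> //] := pselect (has_sup E).
apply: le_trans (normr_ge0 (L 0)) (ub_le_sup ubE _).
by exists 0 => //=; rewrite normr0.
Qed.

Lemma normr_le_dual_norm (L : V -> R) (M : R) :
  (forall (c : R) v, L (c *: v) = c * L v) ->
  (forall v, `|L v| <= M * `|v|) ->
  forall v, `|L v| <= dual_norm L * `|v|.
Proof.
move=> LZ LM v; rewrite /dual_norm; set E := [set _ | _ in _].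
have ubE : has_ubound E.
  exists `|M| => _ [u /= u1 <-]; apply: le_trans (LM u) _.
  apply: le_trans (ler_norm _) _; rewrite normrM.
  by rewrite -[leRHS]mulr1 ler_wpM2l // normr_id.
have [->|v0] := eqVneq v 0.
  by rewrite normr0 mulr0 -(scale0r (0 : V)) LZ mul0r normr0.
have nv : 0 < `|v| by rewrite normr_gt0.
have Eu : E `|L (`|v|^-1 *: v)|.
  exists (`|v|^-1 *: v) => //=.
  by rewrite normrZ normfV normr_id mulVf // gt_eqF.
have := ub_le_sup ubE Eu.
by rewrite LZ normrM normfV normr_id -ler_pdivlMl ?invr_gt0 // invrK mulrC.
Qed.

Lemma convex_set_segment (X : set (convex_lmodType V)) (a b : V) (t : R) :
  convex_set X -> X a -> X b -> 0 <= t -> t <= 1 -> X (a + t *: (b - a)).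
Proof.
move=> cX Xa Xb t0 t1.
have /set_mem := cX b a (Itv01 t0 t1) (mem_set Xb) (mem_set Xa).
congr X; rewrite /conv /=.
by rewrite scalerBl scale1r scalerBr addrCA.
Qed.

End NormedModule.

Lemma le_div_of_mul_sqr_le (R : realFieldType) (b c d : R) :
  0 < c -> 0 <= b -> 0 <= d -> c * d ^+ 2 <= b * d -> d <= b / c.
Proof.
move=> c0 b0; rewrite le_eqVlt => /orP[/eqP <- _|d0 h]; first exact: divr_ge0 (ltW c0).
rewrite ler_pdivlMr // -(ler_pM2l d0); lra.
Qed.

Section FollowTheLeader.
Variables (R : realType) (V : normedModType R) (X : set V) (F : V -> V -> R).
Variables (alpha beta : R) (x : nat -> V).
Hypothesis X_convex : convex_set (X : set (convex_lmodType V)).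
Hypothesis F_diff : forall z y, X z -> X y -> differentiable (F z) y.
Hypothesis F_strongly_convex : forall a b z, X a -> X b -> X z ->
  F z b + 'd (F z) b (a - b) + alpha / 2 * `|a - b| ^+ 2 <= F z a.
Hypothesis dF_lipschitz : forall a b z, X a -> X b -> X z ->
  dual_norm (fun v => 'd (F a) z v - 'd (F b) z v) <= beta * `|a - b|.
Hypothesis x1_in : X (x 1%N).
Hypothesis x_leader : forall n, (1 <= n)%N ->
  X (x n.+1) /\
  forall y, X y -> \sum_(1 <= k < n.+1) F (x k) (x n.+1)
                   <= \sum_(1 <= k < n.+1) F (x k) y.

Lemma leader_in k : (0 < k)%N -> X (x k).
Proof. by case: k => [|[|k]] // _; exact: (x_leader (isT : (0 < k.+1)%N)).1. Qed.

Lemma diff_strongly_monotone z a b : X z -> X a -> X b ->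
  alpha * `|a - b| ^+ 2 <= 'd (F z) a (a - b) - 'd (F z) b (a - b).
Proof.
move=> Xz Xa Xb.
have := F_strongly_convex Xa Xb Xz; have := F_strongly_convex Xb Xa Xz.
by rewrite distrC -[b - a]opprB linearN /=; lra.
Qed.

Lemma diff_sub_le z w a v : X z -> X w -> X a ->
  'd (F z) a v - 'd (F w) a v <= beta * `|z - w| * `|v|.
Proof.
move=> Xz Xw Xa.
have [M1 dz_bounded] := diff_bounded (F_diff Xz Xa).
have [M2 dw_bounded] := diff_bounded (F_diff Xw Xa).
pose L u := 'd (F z) a u - 'd (F w) a u.
have LZ c u : L (c *: u) = c * L u by rewrite /L !linearZ /= -scalerDr.
have LM u : `|L u| <= (M1 + M2) * `|u|.
  by rewrite mulrDl; apply: le_trans (ler_normB _ _) _; apply: lerD.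
apply: le_trans (ler_norm _) _; apply: le_trans (normr_le_dual_norm LZ LM v) _.
exact/ler_wpM2r/dF_lipschitz.
Qed.

Lemma beta_mul_norm_ge0 z w : X z -> X w -> 0 <= beta * `|z - w|.
Proof. by move=> Xz Xw; apply: le_trans (dual_norm_ge0 _) (dF_lipschitz Xz Xw Xz). Qed.

Lemma leader_first_order n y : (1 <= n)%N -> X y ->
  0 <= \sum_(1 <= k < n.+1) 'd (F (x k)) (x n.+1) (y - x n.+1).
Proof.
move=> n1 Xy; have [Xn1 x_min] := x_leader n1.
have dF : {in index_iota 1 n.+1, forall k, differentiable (F (x k)) (x n.+1)}.
  by move=> k; rewrite mem_index_iota => /andP[k1 _]; exact/F_diff/Xn1/leader_in.
have -> : \sum_(1 <= k < n.+1) 'd (F (x k)) (x n.+1) (y - x n.+1) =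
    'd (\sum_(1 <= k < n.+1) F (x k)) (x n.+1) (y - x n.+1).
  by rewrite diff_big // fct_sumE.
apply: diff_ge0_of_segment_min; first exact: differentiable_big.
move=> t t0 t1; rewrite !fct_sumE; apply/x_min/(convex_set_segment X_convex) => //.
exact: ltW.
Qed.

Lemma leader_step_sqr_le n : (1 <= n)%N ->
  n%:R * alpha * `|x n - x n.+1| ^+ 2 <=
    \sum_(1 <= k < n.+1) 'd (F (x k)) (x n) (x n - x n.+1).
Proof.
move=> n1; set D := x n - x n.+1.
have next_opt := leader_first_order n1 (leader_in n1).
have mono : \sum_(1 <= k < n.+1) alpha * `|D| ^+ 2 <=
    \sum_(1 <= k < n.+1) ('d (F (x k)) (x n) D - 'd (F (x k)) (x n.+1) D).
  apply: ler_sum_nat => k /andP[k1 _].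
  by apply: diff_strongly_monotone; apply: leader_in.
rewrite sumr_const_nat sumrB subn1 -mulr_natl in mono; lra.
Qed.

Lemma leader_past_sum_le0 n : (2 <= n)%N ->
  \sum_(1 <= k < n) 'd (F (x k)) (x n) (x n - x n.+1) <= 0.
Proof.
case: n => // n n1; have := leader_first_order n1 (leader_in (isT : (0 < n.+2)%N)).
rewrite -opprB; under eq_bigr do rewrite linearN.
by rewrite sumrN oppr_ge0.
Qed.

Lemma leader_grad_gap_le n v : (0 < n)%N ->
  \sum_(1 <= k < n) ('d (F (x n)) (x n) v - 'd (F (x k)) (x n) v) <=
    beta * (\sum_(1 <= k < n) `|x n - x k|) * `|v|.
Proof.
move=> n0; rewrite mulr_sumr mulr_suml; apply: ler_sum_nat => k /andP[k1 _].
by apply: diff_sub_le; apply: leader_in.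
Qed.

End FollowTheLeader.

Theorem lemma2 (R : realType) (V : normedModType R) (X : set V)
  (F : V -> V -> R) (alpha beta G2 : R) (x : nat -> V) :
  convex_set (X : set (convex_lmodType V)) ->
  (forall z y, X z -> X y -> differentiable (F z) y) ->
  0 < alpha ->
  (forall x0 y z, X x0 -> X y -> X z ->
     F z y + 'd (F z) y (x0 - y) + alpha / 2 * `|x0 - y| ^+ 2 <= F z x0) ->
  (forall x0 y z, X x0 -> X y -> X z ->
     `|F z x0 - F z y| <= G2 * `|x0 - y|) ->
  (forall x0 y z, X x0 -> X y -> X z ->
     dual_norm (fun v => 'd (F x0) z v - 'd (F y) z v) <= beta * `|x0 - y|) ->
  X (x 1%N) ->
  (forall n : nat, (1 <= n)%N ->
     X (x n.+1) /\
     forall y, X y -> \sum_(1 <= k < n.+1) F (x k) (x n.+1)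
                      <= \sum_(1 <= k < n.+1) F (x k) y) ->
  forall n : nat, (2 <= n)%N ->
    `|x n.+1 - x n| <=
      (beta / alpha) * ((n.-1)%:R^-1 * \sum_(1 <= k < n) `|x n - x k|) / n%:R.
Proof.
move=> cX dF alpha0 sc _ gl X1 hit n n2.
have n1 := ltnW n2; set T := \sum_(1 <= k < n) `|x n - x k|; set D := x n - x n.+1.
have lower := leader_step_sqr_le cX dF sc X1 hit n1.
rewrite big_nat_recr //= -/D in lower.
have past := leader_past_sum_le0 cX dF X1 hit n2; rewrite -/D in past.
have gap := leader_grad_gap_le dF gl X1 hit D n1.
rewrite sumrB sumr_const_nat subn1 -mulr_natl -/T in gap.
have T0 : 0 <= beta * T.
  rewrite mulr_sumr big_nat; apply: sumr_ge0 => k /andP[k0 _].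
  by apply: (beta_mul_norm_ge0 gl); apply: (leader_in X1 hit).
have key : alpha * n.-1%:R * n%:R * `|D| ^+ 2 <= beta * T * `|D|.
  have m0 : 0 <= n.-1%:R :> R := ler0n _ _.
  have := ler_wpM2l m0 lower; have := mulr_ge0_le0 m0 past; lra.
have n0 : (0 < n.-1)%N by rewrite ltn_predRL.
have c0 : 0 < alpha * n.-1%:R * n%:R by rewrite !mulr_gt0 // ltr0n.
rewrite distrC -/D.
have -> : beta / alpha * (n.-1%:R^-1 * T) / n%:R = beta * T / (alpha * n.-1%:R * n%:R).
  by field; rewrite !pnatr_eq0 -!lt0n n0 n1 gt_eqF.
exact: le_div_of_mul_sqr_le c0 T0 (normr_ge0 D) key.
Qed.
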